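(* Assume there exist covering templates $\mathbf x^{(1)},\dots,\mathbf x^{(M)}\in\mathbb R^s$ and representation functions $f_{\theta_1},\dots,f_{\theta_M}$ such that the matrix $F\in\mathbb R^{M\times M}$, $F_{i,d}=f_{\theta_d}(\mathbf x^{(i)})$, has pairwise distinct rows and has a column that is constant and non-zero (i.e. some $d$ and $c\neq0$ with $f_{\theta_d}(\mathbf x^{(i)})=c$ for all $i\in[M]$). Consider the shallow fully-connected network with ReLU activation whose $y$-th score function is $$h^{S(fc)}_y(X)=\sum_{z=1}^Z a^y_z\max\Big\{0,\sum_{i=1}^N\sum_{d=1}^M A^z_{i,d}\,f_{\theta_d}(\mathbf x_i)\Big\},\qquad A^z\in\mathbb R^{N\times M},\ \mathbf a^y\in\mathbb R^Z.$$ Then this network is universal: for every tensor $\mathcal A\in\mathbb R^{M\times\cdots\times M}$ of order $N$ there exist $Z$ and weights $\{A^z\}_{z\in[Z]}$, $\mathbf a^y$ such that $\mathcal A(h^{S(fc)}_y)=\mathcal A$ (in fact $Z\ge M^N$ suffices).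
   Context: Inputs are $X=(\mathbf x_1,\dots,\mathbf x_N)\in(\mathbb R^s)^N$. For templates $\mathbf x^{(1)},\dots,\mathbf x^{(M)}\in\mathbb R^s$, the grid tensor of $h:(\mathbb R^s)^N\to\mathbb R$ is the order-$N$ tensor with $\mathcal A(h)_{d_1,\dots,d_N}=h(\mathbf x^{(d_1)},\dots,\mathbf x^{(d_N)})$. Templates are covering if score functions are identified whenever their grid tensors coincide; a network is universal if (w.r.t. covering templates) every tensor is the grid tensor of one of its score functions. *)

From mathcomp Require Import all_boot all_order all_algebra.
From mathcomp Require Import reals.
Set Implicit Arguments. Unset Strict Implicit. Unset Printing Implicit Defensive.
Import Order.TTheory GRing.Theory Num.Theory.
Local Open Scope ring_scope.

Definition input (R : realType) (N s : nat) := 'I_N -> 'rV[R]_s.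

Definition tensor (R : realType) (N M : nat) := ('I_N -> 'I_M) -> R.

Definition grid_tensor (R : realType) (N M s : nat) (xs : 'I_M -> 'rV[R]_s)
  (h : input R N s -> R) : tensor R N M :=
  fun d => h (fun i => xs (d i)).

Definition rep_matrix (R : realType) (M s : nat) (xs : 'I_M -> 'rV[R]_s)
  (f : 'I_M -> 'rV[R]_s -> R) : 'M[R]_M :=
  \matrix_(i < M, d < M) f d (xs i).

Definition relu (R : realType) (x : R) : R := Num.max 0 x.

Definition shallow_fc_score (R : realType) (N M s Z : nat)
  (f : 'I_M -> 'rV[R]_s -> R) (A : 'I_Z -> 'M[R]_(N, M)) (a : 'I_Z -> R)
  (X : input R N s) : R :=
  \sum_(z < Z) a z * relu (\sum_(i < N) \sum_(d < M) A z i d * f d (X i)).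

From mathcomp Require Import all_boot all_order all_algebra.
From mathcomp Require Import reals lra.
From Stdlib Require Import FunctionalExtensionality.
Set Implicit Arguments. Unset Strict Implicit. Unset Printing Implicit Defensive.
Import Order.TTheory GRing.Theory Num.Theory.
Local Open Scope ring_scope.

(* On the M^N grid points, a generic choice of weights W_{i,d} = u^i t^d makes
   the pre-activation sum_{i,d} W_{i,d} f_d(x_i) injective: distinct rows of F
   give distinct polynomials in t, hence distinct values off finitely many
   roots, and likewise in u for distinct index tuples.  Any function on finitely
   many distinct reals is a combination of hinges max(0, s - b_e), one per point
   (a triangular system once the points are sorted), and the constant non-zero
   column of F lets every hidden unit carry its own bias b_e through a single
   weight. *)

Section PowerCode.
Variable R : numDomainType.

Lemma poly_nonroot_nat (p : {poly R}) : p != 0 -> exists m : nat, ~~ root p m%:R.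
Proof.
move=> p_neq0.
have [/hasP [m _ ?]|/hasPn all_roots] :=
  boolP (has (fun m : nat => ~~ root p m%:R) (iota 0 (size p))).
  by exists m.
suff: (size p < size p)%N by rewrite ltnn.
rewrite -{1}(size_iota 0 (size p)) -(size_map (fun m : nat => m%:R : R)).
apply: max_poly_roots => //.
- by apply/allP => _ /mapP [m m_in ->]; have := all_roots m m_in; rewrite negbK.
- by rewrite map_inj_uniq ?iota_uniq // => m n /eqP; rewrite eqr_nat => /eqP.
Qed.

Lemma exists_common_nonroot (I : finType) (P : pred I) (q : I -> {poly R}) :
  (forall i, P i -> q i != 0) -> exists t : R, forall i, P i -> ~~ root (q i) t.
Proof.
move=> q_neq0; have /poly_nonroot_nat [m] : \prod_(i | P i) q i != 0 by exact/prodf_neq0.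
by rewrite /root horner_prod => /prodf_neq0 nonroot; exists m%:R.
Qed.

Lemma horner_rVpoly_sum (n : nat) (v : 'rV[R]_n) (t : R) :
  (rVpoly v).[t] = \sum_(k < n) v 0 k * t ^+ k.
Proof.
rewrite (@horner_coef_wide _ n) ?size_poly //.
by apply: eq_bigr => k _; rewrite coef_rVpoly_ord.
Qed.

Lemma power_code_inj (I : finType) (n : nat) (w : I -> 'rV[R]_n) :
  injective w -> exists t : R, injective (fun i => \sum_(k < n) w i 0 k * t ^+ k).
Proof.
move=> w_inj.
have [|t nonroot] := @exists_common_nonroot _ (fun ij => ij.1 != ij.2)
  (fun ij => rVpoly (w ij.1 - w ij.2)).
  move=> [i j] /=; apply: contra_neq => /(congr1 (@poly_rV _ n)).
  by rewrite rVpolyK linear0 => /eqP; rewrite subr_eq0 => /eqP /w_inj.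
exists t => i j /eqP; rewrite -subr_eq0; apply: contraTeq => ij_neq.
have := nonroot (i, j) ij_neq; rewrite /root horner_rVpoly_sum -sumrB.
by under eq_bigr do rewrite !mxE mulrBl.
Qed.
End PowerCode.

Section ReluInterpolation.
Variables (R : realFieldType) (G : finType) (S : G -> R).

(* Induction on [D], peeling off the point [e0] with the smallest value: its
   hinge sits at [L], and all other hinges sit at or above [S e0]. *)
Lemma relu_interpolation_above (D : {set G}) (L : R) :
  {in D &, injective S} -> {in D, forall e, L < S e} ->
  forall T : G -> R, exists c b : G -> R,
    {in D, forall e, L <= b e} /\
    {in D, forall g, T g = \sum_(e in D) c e * Num.max 0 (S g - b e)}.
Proof.
move: {2}#|D|.+1 (ltnSn #|D|) => n; elim: n D L => [//|n IH] D L D_lt S_inj L_lt T.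
have [->|[x xD]] := set_0Vmem D.
  by exists (fun _ => 0), (fun _ => 0); split=> e; rewrite in_set0.
have [e0 e0D e0_min] : exists2 e0, e0 \in D & forall e, e \in D -> S e0 <= S e.
  by case: (arg_minP S xD) => e0; exists e0.
set D' := D :\ e0.
have D'_lt : (#|D'| < n)%N by move: D_lt; rewrite (cardsD1 e0 D) e0D.
have e0_lt e : e \in D' -> S e0 < S e.
  rewrite in_setD1 => /andP [e_neq eD]; rewrite lt_neqAle e0_min // andbT.
  by apply: contra e_neq => /eqP /S_inj eq; rewrite eq.
pose c0 := T e0 / (S e0 - L).
pose T' g := T g - c0 * Num.max 0 (S g - L).
have [|c [b [b_ge T'E]]] := IH D' (S e0) D'_lt _ e0_lt T'.
  by move=> e1 e2 /setD1P [_ e1D] /setD1P [_ e2D]; exact: S_inj.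
exists (fun e => if e == e0 then c0 else c e), (fun e => if e == e0 then L else b e).
split=> [e eD|g gD].
  case: eqP => [_|/eqP e_neq] //.
  have eD' : e \in D' by rewrite in_setD1 e_neq eD.
  by apply: le_trans (b_ge _ eD'); exact/ltW/L_lt.
rewrite (bigD1 e0) //= eqxx; rewrite (eq_bigl (mem D')); last first.
  by move=> e; rewrite !inE andbC.
rewrite (eq_bigr (fun e => c e * Num.max 0 (S g - b e))); last first.
  by move=> e /setD1P [/negbTE -> _].
have [->|g_neq] := eqVneq g e0.
  rewrite big1 ?addr0 => [|e eD']; last by rewrite max_l ?mulr0 // subr_le0 b_ge.
  have L_lt_e0 : 0 < S e0 - L by rewrite subr_gt0 L_lt.
  by rewrite max_r ?ltW // /c0 divfK // gt_eqF.
by rewrite -T'E ?in_setD1 ?g_neq // /T' addrC subrK.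
Qed.

Lemma relu_interpolation : injective S ->
  forall T : G -> R, exists c b : G -> R,
    forall g, T g = \sum_e c e * Num.max 0 (S g - b e).
Proof.
move=> S_inj T; pose L := - \sum_e `|S e| - 1.
have L_lt e : e \in [set: G] -> L < S e.
  have : `|S e| <= \sum_e `|S e| by rewrite (bigD1 e) //= lerDl sumr_ge0.
  have : - S e <= `|S e| by rewrite -normrN ler_norm.
  rewrite /L; lra.
have [c [b [_ TE]]] := relu_interpolation_above (in2W S_inj) L_lt T.
exists c, b => g; rewrite TE ?in_setT //; apply: eq_bigl => e; exact: in_setT.
Qed.
End ReluInterpolation.

Section ShallowFC.
Variables (R : realType) (N M s : nat) (xs : 'I_M -> 'rV[R]_s).
Variable f : 'I_M -> 'rV[R]_s -> R.

Definition preactivation (W : 'M[R]_(N, M)) (idx : 'I_N -> 'I_M) : R :=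
  \sum_(i < N) \sum_(d < M) W i d * f d (xs (idx i)).

Lemma grid_shallow_fc_score (Z : nat) (A : 'I_Z -> 'M[R]_(N, M)) (a : 'I_Z -> R)
    (idx : 'I_N -> 'I_M) :
  grid_tensor xs (shallow_fc_score f A a) idx =
  \sum_(z < Z) a z * relu (preactivation (A z) idx).
Proof. by []. Qed.

Lemma preactivation_power_weights (t u : R) (idx : 'I_N -> 'I_M) :
  preactivation (\matrix_(i, d) (u ^+ i * t ^+ d)) idx =
  \sum_(i < N) (\sum_(d < M) f d (xs (idx i)) * t ^+ d) * u ^+ i.
Proof.
apply: eq_bigr => i _; rewrite mulr_suml; apply: eq_bigr => d _.
by rewrite mxE -mulrA mulrC [t ^+ d * _]mulrC.
Qed.

Lemma exists_injective_preactivation :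
  injective (fun i => row i (rep_matrix xs f)) ->
  exists W : 'M[R]_(N, M), injective (fun g : {ffun 'I_N -> 'I_M} => preactivation W g).
Proof.
move=> rows_inj; have [t code_inj] := power_code_inj rows_inj.
pose code k := \sum_(d < M) row k (rep_matrix xs f) 0 d * t ^+ d.
have codeE k : code k = \sum_(d < M) f d (xs k) * t ^+ d.
  by apply: eq_bigr => d _; rewrite !mxE.
have [|u tuple_code_inj] := power_code_inj (w := fun g : {ffun 'I_N -> 'I_M} => \row_i code (g i)).
  move=> g h /rowP gh; apply/ffunP => i; apply: code_inj.
  by have := gh i; rewrite !mxE.
exists (\matrix_(i, d) (u ^+ i * t ^+ d)) => g h.
rewrite /= !preactivation_power_weights => gh; apply: tuple_code_inj.
by under eq_bigr do rewrite mxE codeE; under [RHS]eq_bigr do rewrite mxE codeE.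
Qed.

Lemma preactivationD (W1 W2 : 'M[R]_(N, M)) (idx : 'I_N -> 'I_M) :
  preactivation (W1 + W2) idx = preactivation W1 idx + preactivation W2 idx.
Proof.
rewrite /preactivation -big_split; apply: eq_bigr => i _.
by rewrite -big_split; apply: eq_bigr => d _; rewrite mxE mulrDl.
Qed.

Lemma preactivation_delta (a : R) (i0 : 'I_N) (d0 : 'I_M) (idx : 'I_N -> 'I_M) :
  preactivation (a *: delta_mx i0 d0) idx = a * f d0 (xs (idx i0)).
Proof.
rewrite /preactivation (bigD1 i0) //= (bigD1 d0) //= !mxE !eqxx mulr1.
rewrite big1 ?addr0 => [|d d_neq]; last by rewrite !mxE eqxx (negbTE d_neq) mulr0 mul0r.
rewrite big1 ?addr0 // => i i_neq.
by rewrite big1 // => d _; rewrite !mxE (negbTE i_neq) mulr0 mul0r.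
Qed.
End ShallowFC.

Lemma sum_ord_pad (V : nmodType) (n Z : nat) (H : 'I_n -> V) : (n <= Z)%N ->
  \sum_(z < Z) oapp H 0 (insub (val z)) = \sum_(k < n) H k.
Proof.
move=> le_nZ; rewrite [RHS](eq_bigr (fun k : 'I_n => oapp H 0 (insub (val k)))).
  rewrite (big_ord_widen _ (fun m => oapp H 0 (insub m)) le_nZ).
rewrite (bigID (fun z : 'I_Z => (z < n)%N)) /= [X in _ + X]big1 ?addr0 // => z.
  by move=> /negbTE z_ge; rewrite insubF.
by move=> k _; rewrite valK.
Qed.

Theorem claim7 (R : realType) (N M s : nat) (xs : 'I_M -> 'rV[R]_s)
  (f : 'I_M -> 'rV[R]_s -> R) :
  (0 < N)%N ->
  (* F has pairwise distinct rows *)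
  (forall i j : 'I_M, row i (rep_matrix xs f) = row j (rep_matrix xs f) -> i = j) ->
  (* F has a constant non-zero column *)
  (exists (d : 'I_M) (c : R), c != 0 /\ forall i : 'I_M, rep_matrix xs f i d = c) ->
  forall T : tensor R N M,
    forall Z : nat, (M ^ N <= Z)%N ->
      exists (A : 'I_Z -> 'M[R]_(N, M)) (a : 'I_Z -> R),
        forall idx : 'I_N -> 'I_M,
          grid_tensor xs (shallow_fc_score f A a) idx = T idx.
Proof.
move=> N_gt0 rows_inj [d0 [c0 [c0_neq0 col_d0]]] T Z le_Z.
pose G := {ffun 'I_N -> 'I_M}.
have [W W_inj] := exists_injective_preactivation N rows_inj.
have [c [b T_interp]] := relu_interpolation W_inj (fun g : G => T g).
have col_d0E k : f d0 (xs k) = c0 by rewrite -(col_d0 k) mxE.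
pose i0 : 'I_N := Ordinal N_gt0.
(* The constant column [d0] turns the weight at [(i0, d0)] into a bias. *)
pose neuron (e : G) := W + (- b e / c0) *: delta_mx i0 d0.
have neuronE e idx : preactivation xs f (neuron e) idx = preactivation xs f W idx - b e.
  by rewrite preactivationD preactivation_delta col_d0E divfK.
pose A (z : 'I_Z) := oapp (fun k : 'I_#|G| => neuron (enum_val k)) 0 (insub (val z)).
pose a (z : 'I_Z) := oapp (fun k : 'I_#|G| => c (enum_val k)) 0 (insub (val z)).
exists A, a => idx.
have [g ->] : exists g : G, idx = g.
  by exists [ffun i => idx i]; apply: functional_extensionality => i; rewrite ffunE.
rewrite grid_shallow_fc_score.
pose term (e : G) := c e * relu (preactivation xs f (neuron e) g).
rewrite (eq_bigr (fun z : 'I_Z =>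
  oapp (fun k : 'I_#|G| => term (enum_val k)) 0 (insub (val z)))); last first.
  by move=> z _; rewrite /A /a; case: insub => [k|] /=; rewrite ?mul0r.
rewrite sum_ord_pad ?card_ffun ?card_ord // -(big_enum_val term) /=.
by rewrite T_interp; apply: eq_big => // e _; rewrite /term neuronE.
Qed.
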